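(* Let $\alpha\in(0,1)$, $\gamma,\beta>0$, $r_0>0$, $Y=B(0,r_0)\subset\mathbb R\oplus\mathbb R^{d-1}$, $\mathcal X(x)=\|x\|^\alpha Ax$ with $A=\gamma\,\mathrm{Id}_{\mathbb R}\oplus(-\beta\,\mathrm{Id}_{\mathbb R^{d-1}})$. For a trajectory $x(t)$ of $\mathcal X$ in $Y$, with $\theta(t)$ the angle between $x(t)$ and $\mathbb R\times\{0\}$ ($\tan\theta=\|x_s\|/\|x_u\|$), $$\frac{d}{dt}\|x\|^{-\alpha}=\alpha(\beta\sin^2\theta-\gamma\cos^2\theta)=\alpha\xi(\tan\theta),\qquad \xi(s)=\frac{\beta s^2-\gamma}{s^2+1}.$$ In particular, for every piece of trajectory $x\colon[0,T]\to Y$ and $t\in[0,T]$: $-\gamma\alpha\le\frac{d}{dt}\|x\|^{-\alpha}\le\beta\alpha$, $\|x(t)\|^{-\alpha}\le\|x(T)\|^{-\alpha}+\gamma\alpha(T-t)$, and $\|x(t)\|^{-\alpha}\le\|x(0)\|^{-\alpha}+\beta\alpha t$. Moreover, if $x\colon[0,T_0]\to Y$ enters $Y$ at time $0$ and leaves it at time $T_0$ (so $\|x(0)\|=\|x(T_0)\|=r_0$), and $s$ satisfies $\tan\theta(0)>s>\tan\theta(T_0)$ with $T_s$ the time at which $\tan\theta(T_s)=s$, then $\|x(t)\|^{-\alpha}\ge r_0^{-\alpha}+\alpha\xi(s)t$ for all $t\in[0,T_s]$ and $\|x(t)\|^{-\alpha}\ge r_0^{-\alpha}-\alpha\xi(s)(T_0-t)$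 for all $t\in[T_s,T_0]$.
   Context: $T_s$ is well defined because $\tan\theta$ is strictly decreasing along trajectories in $Y$. *)

From Stdlib Require Import Reals List.
From Coquelicot Require Import Rbar.
Open Scope R_scope.

(* State space R (+) R^n with n = d-1.  A point is (u, v) with u : R the
   unstable coordinate and v : nat -> R the stable part, of which only the
   coordinates v 0, ..., v (n-1) are used. *)

Definition sqnorm (n : nat) (v : nat -> R) : R :=
  fold_right Rplus 0 (map (fun i => v i ^ 2) (seq 0 n)).

Definition enorm (n : nat) (u : R) (v : nat -> R) : R :=
  sqrt (u ^ 2 + sqnorm n v).

Definition trajnorm (n : nat) (xu : R -> R) (xs : nat -> R -> R) (t : R) : R :=
  enorm n (xu t) (fun i => xs i t).

Definition is_traj (n : nat) (alpha gamma beta : R)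
    (xu : R -> R) (xs : nat -> R -> R) (a b : R) : Prop :=
  forall t, a <= t <= b ->
    derivable_pt_lim xu t (Rpower (trajnorm n xu xs t) alpha * (gamma * xu t)) /\
    (forall i, (i < n)%nat ->
       derivable_pt_lim (xs i) t
         (Rpower (trajnorm n xu xs t) alpha * (- beta * xs i t))).

Definition theta (n : nat) (xu : R -> R) (xs : nat -> R -> R) (t : R) : R :=
  if Req_EM_T (xu t) 0 then PI / 2
  else atan (sqrt (sqnorm n (fun i => xs i t)) / Rabs (xu t)).

Definition tantheta (n : nat) (xu : R -> R) (xs : nat -> R -> R) (t : R) : Rbar :=
  if Req_EM_T (xu t) 0 then p_infty else Finite (tan (theta n xu xs t)).

Definition xi (beta gamma s : R) : R := (beta * s ^ 2 - gamma) / (s ^ 2 + 1).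

(* Write x = (u, v) and F = u^2 + |v|^2. Then F' = 2 |x|^alpha (gamma u^2 - beta |v|^2), hence
   (|x|^-alpha)' = alpha (beta |v|^2 - gamma u^2) / F
                 = alpha (beta sin^2 theta - gamma cos^2 theta),
   a rate in [-gamma alpha, beta alpha]; integrating it gives the first family of bounds.
   Also (|v|^2 / u^2)' = -2 |x|^alpha (beta + gamma) |v|^2 / u^2 <= 0, so tan theta decreases,
   and so does the rate alpha xi(tan theta), xi being increasing in tan^2 theta: it is at least
   alpha xi(s) before T_s and at most alpha xi(s) after. Integrating from the entrance and from
   the exit time gives the second family. Gronwall estimates keep x away from the origin and
   u nonzero up to the exit time, where the formulas above make sense. *)

From Stdlib Require Import Reals Lra Lia List.
From Coquelicot Require Import Rbar.
Open Scope R_scope.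

Lemma derivable_pt_lim_value f x l l' :
  derivable_pt_lim f x l -> l = l' -> derivable_pt_lim f x l'.
Proof. now intros H <-. Qed.

Lemma derivable_pt_lim_sq f x l :
  derivable_pt_lim f x l -> derivable_pt_lim (fun y => f y ^ 2) x (2 * f x * l).
Proof.
  intros H. eapply derivable_pt_lim_value.
  - apply (derivable_pt_lim_comp f (fun z => z ^ 2)); [exact H | apply derivable_pt_lim_pow].
  - simpl; ring.
Qed.

Lemma derivable_pt_lim_scal_id m x : derivable_pt_lim (fun y => m * y) x m.
Proof.
  eapply derivable_pt_lim_value.
  - apply (derivable_pt_lim_scal id); apply derivable_pt_lim_id.
  - ring.
Qed.

Lemma derivable_pt_lim_exp_scal K x :
  derivable_pt_lim (fun y => exp (K * y)) x (K * exp (K * x)).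
Proof.
  eapply derivable_pt_lim_value.
  - apply (derivable_pt_lim_comp (fun y => K * y) exp);
      [apply derivable_pt_lim_scal_id | apply derivable_pt_lim_exp].
  - ring.
Qed.

Lemma le_of_deriv_nonneg f d a b : a <= b ->
  (forall t, a <= t <= b -> derivable_pt_lim f t (d t)) ->
  (forall t, a <= t <= b -> 0 <= d t) -> f a <= f b.
Proof.
  intros Hab Hf Hd. destruct (Req_dec a b) as [<-|Hne]; [lra|].
  destruct (MVT_cor2 f d a b) as [c [Hc Hcab]]; [lra | exact Hf |].
  assert (0 <= d c) by (apply Hd; lra). nra.
Qed.

Lemma deriv_ge_integrate f d m a b : a <= b ->
  (forall t, a <= t <= b -> derivable_pt_lim f t (d t)) ->
  (forall t, a <= t <= b -> m <= d t) -> f a + m * (b - a) <= f b.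
Proof.
  intros Hab Hf Hd.
  enough (f a - m * a <= f b - m * b) by lra.
  apply (le_of_deriv_nonneg (fun t => f t - m * t) (fun t => d t - m));
    [exact Hab | | intros t Ht; specialize (Hd t Ht); lra].
  intros t Ht. apply (derivable_pt_lim_minus f (fun y => m * y));
    [exact (Hf t Ht) | apply derivable_pt_lim_scal_id].
Qed.

Lemma deriv_le_integrate f d m a b : a <= b ->
  (forall t, a <= t <= b -> derivable_pt_lim f t (d t)) ->
  (forall t, a <= t <= b -> d t <= m) -> f b <= f a + m * (b - a).
Proof.
  intros Hab Hf Hd.
  enough (m * a - f a <= m * b - f b) by lra.
  apply (le_of_deriv_nonneg (fun t => m * t - f t) (fun t => m - d t));
    [exact Hab | | intros t Ht; specialize (Hd t Ht); lra].
  intros t Ht. apply (derivable_pt_lim_minus (fun y => m * y) f);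
    [apply derivable_pt_lim_scal_id | exact (Hf t Ht)].
Qed.

(* Gronwall: [f e^{Kt}] (resp. [f e^{-Kt}]) is monotone, so positivity of [f]
   cannot be lost forward (resp. backward) in time. *)
Lemma pos_propagates_forward f d K a b :
  (forall t, a <= t <= b -> derivable_pt_lim f t (d t)) ->
  (forall t, a <= t <= b -> - K * f t <= d t) ->
  0 < f a -> forall t, a <= t <= b -> 0 < f t.
Proof.
  intros Hf Hd Ha t Ht.
  assert (Hmono : f a * exp (K * a) <= f t * exp (K * t)).
  { apply (le_of_deriv_nonneg (fun y => f y * exp (K * y))
      (fun y => d y * exp (K * y) + f y * (K * exp (K * y)))); [lra | |].
    - intros y Hy. apply (derivable_pt_lim_mult f (fun z => exp (K * z)));
        [apply Hf; lra | apply derivable_pt_lim_exp_scal].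
    - intros y Hy. specialize (Hd y ltac:(lra)). pose proof (exp_pos (K * y)). nra. }
  pose proof (exp_pos (K * a)). pose proof (exp_pos (K * t)). nra.
Qed.

Lemma pos_propagates_backward f d K a b :
  (forall t, a <= t <= b -> derivable_pt_lim f t (d t)) ->
  (forall t, a <= t <= b -> d t <= K * f t) ->
  0 < f b -> forall t, a <= t <= b -> 0 < f t.
Proof.
  intros Hf Hd Hb t Ht.
  assert (Hmono : - (f t * exp (- K * t)) <= - (f b * exp (- K * b))).
  { apply (le_of_deriv_nonneg (fun y => - (f y * exp (- K * y)))
      (fun y => - (d y * exp (- K * y) + f y * (- K * exp (- K * y))))); [lra | |].
    - intros y Hy. apply derivable_pt_lim_opp.
      apply (derivable_pt_lim_mult f (fun z => exp (- K * z)));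
        [apply Hf; lra | apply derivable_pt_lim_exp_scal].
    - intros y Hy. specialize (Hd y ltac:(lra)). pose proof (exp_pos (- K * y)). nra. }
  pose proof (exp_pos (- K * b)). pose proof (exp_pos (- K * t)). nra.
Qed.

(* Junk value: [ln 0 = 0]. *)
Lemma Rpower_0_l x : Rpower 0 x = 1.
Proof.
  unfold Rpower, ln. destruct (Rlt_dec 0 0) as [h|h].
  - exfalso; exact (Rlt_irrefl 0 h).
  - rewrite Rmult_0_r; apply exp_0.
Qed.

Lemma sqnorm_ge0 n v : 0 <= sqnorm n v.
Proof.
  unfold sqnorm. induction (seq 0 n) as [|i l IH]; cbn [map fold_right]; [lra|].
  pose proof (pow2_ge_0 (v i)). lra.
Qed.

Lemma derivable_pt_lim_sqnorm n (v : nat -> R -> R) k t :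
  (forall i, (i < n)%nat -> derivable_pt_lim (v i) t (k * v i t)) ->
  derivable_pt_lim (fun y => sqnorm n (fun i => v i y)) t
    (2 * k * sqnorm n (fun i => v i t)).
Proof.
  intros Hv. unfold sqnorm.
  assert (Hl : forall i, In i (seq 0 n) -> derivable_pt_lim (v i) t (k * v i t))
    by (intros i Hi; apply in_seq in Hi; apply Hv; lia).
  induction (seq 0 n) as [|i l IH]; cbn [map fold_right].
  - eapply derivable_pt_lim_value; [apply derivable_pt_lim_const | ring].
  - eapply derivable_pt_lim_value.
    + apply (derivable_pt_lim_plus (fun y => v i y ^ 2));
        [apply derivable_pt_lim_sq, Hl; now left | apply IH; intros j Hj; apply Hl; now right].
    + ring.
Qed.

Lemma rate_atan beta gamma q :
  beta * sin (atan q) ^ 2 - gamma * cos (atan q) ^ 2 = xi beta gamma q.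
Proof.
  rewrite sin_atan, cos_atan. unfold xi.
  assert (H1 : 0 < 1 + q²) by (pose proof (Rle_0_sqr q); lra).
  assert (H2 : sqrt (1 + q²) ^ 2 = 1 + q²) by (rewrite pow2_sqrt; lra).
  assert (H3 : 0 < sqrt (1 + q²)) by (apply sqrt_lt_R0; lra).
  unfold Rdiv. rewrite !Rpow_mult_distr, pow_inv, H2. unfold Rsqr. field. nra.
Qed.

Lemma rate_bounds beta gamma x : 0 <= beta -> 0 <= gamma ->
  - gamma <= beta * sin x ^ 2 - gamma * cos x ^ 2 <= beta.
Proof.
  intros Hb Hg. pose proof (sin2_cos2 x) as H. rewrite !Rsqr_pow2 in H.
  pose proof (pow2_ge_0 (sin x)). pose proof (pow2_ge_0 (cos x)). nra.
Qed.

Lemma xi_le_sq beta gamma s1 s2 : 0 <= beta + gamma -> s1 ^ 2 <= s2 ^ 2 ->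
  xi beta gamma s1 <= xi beta gamma s2.
Proof.
  intros Hbg Hs. pose proof (pow2_ge_0 s1).
  assert (Hxi : forall s, xi beta gamma s = beta - (beta + gamma) / (s ^ 2 + 1))
    by (intros s; unfold xi; field; pose proof (pow2_ge_0 s); lra).
  rewrite !Hxi. unfold Rdiv.
  enough ((beta + gamma) * / (s2 ^ 2 + 1) <= (beta + gamma) * / (s1 ^ 2 + 1)) by lra.
  apply Rmult_le_compat_l; [exact Hbg|]. apply Rinv_le_contravar; lra.
Qed.

Lemma sq_pos_of_neq0 x : x <> 0 -> 0 < x ^ 2.
Proof. intros Hx. pose proof (Rsqr_pos_lt x Hx). unfold Rsqr in *. nra. Qed.

Section Trajectory.
Context {n : nat} {alpha gamma beta : R} {xu : R -> R} {xs : nat -> R -> R}.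

Let S t := sqnorm n (fun i => xs i t).
Let F t := xu t ^ 2 + S t.
Let c t := Rpower (trajnorm n xu xs t) alpha.

Lemma F_pos_of_trajnorm_neq0 t : trajnorm n xu xs t <> 0 -> 0 < F t.
Proof.
  intros Ht. pose proof (sqnorm_ge0 n (fun i => xs i t)). pose proof (pow2_ge_0 (xu t)).
  destruct (Req_dec (F t) 0) as [E|E]; [|unfold F, S in *; lra].
  exfalso. apply Ht. unfold trajnorm, enorm. fold (S t). fold (F t). rewrite E. apply sqrt_0.
Qed.

Lemma tan_theta_sq t : xu t <> 0 -> tan (theta n xu xs t) ^ 2 = S t / xu t ^ 2.
Proof.
  intros Hu. unfold theta. destruct (Req_EM_T (xu t) 0) as [E|_]; [contradiction|].
  rewrite tan_atan. pose proof (sqnorm_ge0 n (fun i => xs i t)).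
  unfold Rdiv. rewrite Rpow_mult_distr, pow_inv, pow2_sqrt, <- Rsqr_pow2, <- Rsqr_abs, Rsqr_pow2
    by lra.
  reflexivity.
Qed.

Lemma rate_xi t : xu t <> 0 ->
  beta * sin (theta n xu xs t) ^ 2 - gamma * cos (theta n xu xs t) ^ 2
  = xi beta gamma (tan (theta n xu xs t)).
Proof.
  intros Hu. unfold theta at 1 2. destruct (Req_EM_T (xu t) 0) as [E|_]; [contradiction|].
  rewrite rate_atan. f_equal. unfold theta. destruct (Req_EM_T (xu t) 0); [contradiction|].
  now rewrite tan_atan.
Qed.

Lemma rate_theta t : 0 < F t ->
  beta * sin (theta n xu xs t) ^ 2 - gamma * cos (theta n xu xs t) ^ 2
  = (beta * S t - gamma * xu t ^ 2) / F t.
Proof.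
  intros HF. destruct (Req_dec (xu t) 0) as [E|E].
  - unfold theta. destruct (Req_EM_T (xu t) 0) as [_|]; [|contradiction].
    rewrite sin_PI2, cos_PI2. unfold F in *. rewrite E in *. field. lra.
  - rewrite rate_xi by exact E. unfold xi. rewrite tan_theta_sq by exact E.
    pose proof (sq_pos_of_neq0 _ E). unfold F. field. unfold F in HF. lra.
Qed.

Lemma tantheta_lt_finite t s :
  Rbar_lt (tantheta n xu xs t) (Finite s) -> xu t <> 0.
Proof. unfold tantheta. destruct (Req_EM_T (xu t) 0) as [_|E]; [easy | now intros _]. Qed.

Lemma tantheta_eq_finite t s :
  tantheta n xu xs t = Finite s -> xu t <> 0 /\ tan (theta n xu xs t) = s.
Proof.
  unfold tantheta. destruct (Req_EM_T (xu t) 0) as [_|E]; [easy|].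
  intros H. injection H. now split.
Qed.

Section OnInterval.
Context {a b : R}.
Hypothesis traj : is_traj n alpha gamma beta xu xs a b.

Lemma deriv_S t : a <= t <= b -> derivable_pt_lim S t (2 * (c t * - beta) * S t).
Proof.
  intros Ht. apply derivable_pt_lim_sqnorm. intros i Hi.
  eapply derivable_pt_lim_value; [apply (proj2 (traj t Ht)), Hi | unfold c; ring].
Qed.

Lemma deriv_F t : a <= t <= b ->
  derivable_pt_lim F t (2 * c t * (gamma * xu t ^ 2 - beta * S t)).
Proof.
  intros Ht. eapply derivable_pt_lim_value.
  - apply (derivable_pt_lim_plus (fun y => xu y ^ 2) S);
      [apply derivable_pt_lim_sq, (proj1 (traj t Ht)) | apply deriv_S, Ht].
  - unfold c; ring.
Qed.

Lemma deriv_tan_sq t : a <= t <= b -> xu t <> 0 ->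
  derivable_pt_lim (fun y => S y / xu y ^ 2) t (- (2 * c t * (beta + gamma) * S t / xu t ^ 2)).
Proof.
  intros Ht Hu. pose proof (sq_pos_of_neq0 _ Hu).
  eapply derivable_pt_lim_value.
  - apply (derivable_pt_lim_div S (fun y => xu y ^ 2));
      [apply deriv_S, Ht | apply derivable_pt_lim_sq, (proj1 (traj t Ht)) | lra].
  - unfold Rsqr, c. field. exact Hu.
Qed.

Lemma deriv_normpow t : a <= t <= b -> 0 < F t ->
  derivable_pt_lim (fun y => Rpower (trajnorm n xu xs y) (- alpha)) t
    (alpha * (beta * S t - gamma * xu t ^ 2) / F t).
Proof.
  intros Ht HF. unfold trajnorm, enorm. fold S F.
  assert (HN : 0 < sqrt (F t)) by (apply sqrt_lt_R0, HF).
  assert (HNN : sqrt (F t) * sqrt (F t) = F t) by (apply sqrt_sqrt; lra).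
  assert (Hk : Rpower (sqrt (F t)) (- alpha - 1) * Rpower (sqrt (F t)) alpha = / sqrt (F t)).
  { rewrite <- Rpower_plus. replace (- alpha - 1 + alpha) with (Ropp 1) by ring.
    rewrite Rpower_Ropp, Rpower_1; [reflexivity | exact HN]. }
  eapply derivable_pt_lim_value.
  - apply (derivable_pt_lim_comp (fun y => sqrt (F y)) (fun z => Rpower z (- alpha))).
    + apply (derivable_pt_lim_comp F sqrt); [apply deriv_F, Ht | apply derivable_pt_lim_sqrt, HF].
    + apply derivable_pt_lim_power, HN.
  - unfold c, trajnorm, enorm. fold (S t) (F t).
    transitivity (- alpha * (Rpower (sqrt (F t)) (- alpha - 1) * Rpower (sqrt (F t)) alpha)
                  * (/ (2 * sqrt (F t)) * (2 * (gamma * xu t ^ 2 - beta * S t)))); [ring|].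
    rewrite Hk. set (N := sqrt (F t)) in *. rewrite <- HNN. field. lra.
Qed.

Lemma deriv_normpow_theta t : a <= t <= b -> trajnorm n xu xs t <> 0 ->
  derivable_pt_lim (fun y => Rpower (trajnorm n xu xs y) (- alpha)) t
    (alpha * (beta * sin (theta n xu xs t) ^ 2 - gamma * cos (theta n xu xs t) ^ 2)).
Proof.
  intros Ht HN. pose proof (F_pos_of_trajnorm_neq0 t HN) as HF.
  eapply derivable_pt_lim_value; [apply deriv_normpow; assumption|].
  rewrite rate_theta by exact HF. field. lra.
Qed.

Lemma tan_theta_sq_antitone : 0 <= beta + gamma ->
  (forall t, a <= t <= b -> xu t <> 0) ->
  forall x y, a <= x -> x <= y -> y <= b ->
  tan (theta n xu xs y) ^ 2 <= tan (theta n xu xs x) ^ 2.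
Proof.
  intros Hbg Hu x y Hax Hxy Hyb.
  rewrite !tan_theta_sq by (apply Hu; lra).
  enough (- (S x / xu x ^ 2) <= - (S y / xu y ^ 2)) by lra.
  apply (le_of_deriv_nonneg (fun t => - (S t / xu t ^ 2))
           (fun t => 2 * c t * (beta + gamma) * S t / xu t ^ 2)); [exact Hxy | |].
  - intros t Ht. eapply derivable_pt_lim_value.
    + apply derivable_pt_lim_opp, deriv_tan_sq; [lra | apply Hu; lra].
    + ring.
  - intros t Ht. pose proof (sq_pos_of_neq0 _ (Hu t ltac:(lra))).
    pose proof (sqnorm_ge0 n (fun i => xs i t)). fold (S t) in *.
    assert (0 <= c t) by (left; apply exp_pos).
    apply Rmult_le_pos; [|left; apply Rinv_0_lt_compat; lra].
    apply Rmult_le_pos; [|lra]. apply Rmult_le_pos; lra.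
Qed.

Context {r0 : R}.
Hypotheses (Halpha : 0 <= alpha) (Hgamma : 0 <= gamma) (Hbeta : 0 <= beta).
Hypothesis in_ball : forall t, a <= t <= b -> trajnorm n xu xs t <= r0.

Lemma rate_factor_bound t : a <= t <= b -> 0 < c t <= 1 + Rpower r0 alpha.
Proof.
  intros Ht. split; [apply exp_pos|]. unfold c.
  assert (0 <= trajnorm n xu xs t) by apply sqrt_pos.
  assert (0 < Rpower r0 alpha) by apply exp_pos.
  destruct (Req_dec (trajnorm n xu xs t) 0) as [E|E].
  - rewrite E, Rpower_0_l. lra.
  - enough (Rpower (trajnorm n xu xs t) alpha <= Rpower r0 alpha) by lra.
    apply Rle_Rpower_l; [exact Halpha|]. split; [lra | apply in_ball, Ht].
Qed.

Lemma trajnorm_neq0_forward :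
  trajnorm n xu xs a <> 0 -> forall t, a <= t <= b -> trajnorm n xu xs t <> 0.
Proof.
  intros Ha t Ht.
  enough (0 < F t) by (unfold trajnorm, enorm; apply Rgt_not_eq, sqrt_lt_R0; assumption).
  revert t Ht. apply (pos_propagates_forward F
    (fun t => 2 * c t * (gamma * xu t ^ 2 - beta * S t)) (2 * beta * (1 + Rpower r0 alpha))).
  - exact deriv_F.
  - intros t Ht. pose proof (rate_factor_bound t Ht).
    pose proof (sqnorm_ge0 n (fun i => xs i t)). pose proof (pow2_ge_0 (xu t)).
    fold (S t) in *. unfold F.
    assert (0 <= c t * gamma * xu t ^ 2) by (apply Rmult_le_pos; [apply Rmult_le_pos|]; lra).
    assert (0 <= (1 + Rpower r0 alpha - c t) * beta * S t)
      by (apply Rmult_le_pos; [apply Rmult_le_pos|]; lra).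
    assert (0 <= xu t ^ 2 * beta * (1 + Rpower r0 alpha))
      by (apply Rmult_le_pos; [apply Rmult_le_pos|]; lra).
    nra.
  - apply F_pos_of_trajnorm_neq0, Ha.
Qed.

Lemma xu_neq0_backward : xu b <> 0 -> forall t, a <= t <= b -> xu t <> 0.
Proof.
  intros Hb t Ht.
  enough (0 < xu t ^ 2) by (intros E; rewrite E in *; lra).
  revert t Ht. apply (pos_propagates_backward (fun t => xu t ^ 2)
    (fun t => 2 * xu t * (c t * (gamma * xu t))) (2 * gamma * (1 + Rpower r0 alpha))).
  - intros t Ht. apply derivable_pt_lim_sq, (proj1 (traj t Ht)).
  - intros t Ht. pose proof (rate_factor_bound t Ht). pose proof (pow2_ge_0 (xu t)).
    assert (0 <= (1 + Rpower r0 alpha - c t) * gamma * xu t ^ 2)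
      by (apply Rmult_le_pos; [apply Rmult_le_pos|]; lra).
    nra.
  - apply sq_pos_of_neq0, Hb.
Qed.

Lemma normpow_growth_bounds : trajnorm n xu xs a <> 0 -> forall t, a <= t <= b ->
  Rpower (trajnorm n xu xs t) (- alpha)
    <= Rpower (trajnorm n xu xs b) (- alpha) + gamma * alpha * (b - t) /\
  Rpower (trajnorm n xu xs t) (- alpha)
    <= Rpower (trajnorm n xu xs a) (- alpha) + beta * alpha * (t - a).
Proof.
  intros Ha t Ht. pose proof (trajnorm_neq0_forward Ha) as HN.
  set (P u := Rpower (trajnorm n xu xs u) (- alpha)).
  set (D u := alpha * (beta * sin (theta n xu xs u) ^ 2 - gamma * cos (theta n xu xs u) ^ 2)).
  assert (HD : forall u, a <= u <= b -> derivable_pt_lim P u (D u))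
    by (intros u Hu; apply deriv_normpow_theta; [exact Hu | apply HN, Hu]).
  assert (HDb : forall u, - gamma * alpha <= D u <= beta * alpha)
    by (intros u; pose proof (rate_bounds beta gamma (theta n xu xs u) Hbeta Hgamma);
        unfold D; nra).
  split.
  - pose proof (deriv_ge_integrate P D (- gamma * alpha) t b ltac:(lra)
                  (fun u Hu => HD u ltac:(lra)) (fun u _ => proj1 (HDb u))).
    unfold P in *; lra.
  - exact (deriv_le_integrate P D (beta * alpha) a t ltac:(lra)
             (fun u Hu => HD u ltac:(lra)) (fun u _ => proj2 (HDb u))).
Qed.

Lemma normpow_exit_bounds s Ts :
  trajnorm n xu xs a <> 0 -> xu b <> 0 -> a <= Ts <= b -> tan (theta n xu xs Ts) = s ->
  (forall t, a <= t <= Ts -> Rpower (trajnorm n xu xs a) (- alpha)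
     + alpha * xi beta gamma s * (t - a) <= Rpower (trajnorm n xu xs t) (- alpha)) /\
  (forall t, Ts <= t <= b -> Rpower (trajnorm n xu xs b) (- alpha)
     <= Rpower (trajnorm n xu xs t) (- alpha) + alpha * xi beta gamma s * (b - t)).
Proof.
  intros Ha Hb HTs Htan. pose proof (trajnorm_neq0_forward Ha) as HN.
  pose proof (xu_neq0_backward Hb) as Hxu.
  set (P u := Rpower (trajnorm n xu xs u) (- alpha)).
  set (D u := alpha * xi beta gamma (tan (theta n xu xs u))).
  assert (HD : forall u, a <= u <= b -> derivable_pt_lim P u (D u)).
  { intros u Hu. eapply derivable_pt_lim_value; [apply deriv_normpow_theta; auto|].
    unfold D. now rewrite rate_xi by auto. }
  assert (Hcmp : forall x y, a <= x -> x <= y -> y <= b -> D y <= D x).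
  { intros x y Hx Hxy Hy. apply Rmult_le_compat_l; [exact Halpha|].
    apply xi_le_sq; [lra|]. apply tan_theta_sq_antitone; auto; lra. }
  assert (HDs : D Ts = alpha * xi beta gamma s) by (unfold D; now rewrite Htan).
  split; intros t Ht.
  - exact (deriv_ge_integrate P D (alpha * xi beta gamma s) a t ltac:(lra)
             (fun u Hu => HD u ltac:(lra))
             (fun u Hu => ltac:(rewrite <- HDs; apply Hcmp; lra))).
  - exact (deriv_le_integrate P D (alpha * xi beta gamma s) t b ltac:(lra)
             (fun u Hu => HD u ltac:(lra))
             (fun u Hu => ltac:(rewrite <- HDs; apply Hcmp; lra))).
Qed.

End OnInterval.
End Trajectory.

Theorem lemma7p2 (n : nat) (alpha gamma beta r0 : R)
  (xu : R -> R) (xs : nat -> R -> R) :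
  0 < alpha < 1 -> 0 < gamma -> 0 < beta -> 0 < r0 ->
  (forall T : R, 0 <= T ->
     is_traj n alpha gamma beta xu xs 0 T ->
     (forall t, 0 <= t <= T -> trajnorm n xu xs t < r0) ->
     trajnorm n xu xs 0 <> 0 ->
     forall t, 0 <= t <= T ->
       derivable_pt_lim (fun u => Rpower (trajnorm n xu xs u) (- alpha)) t
         (alpha * (beta * sin (theta n xu xs t) ^ 2
                   - gamma * cos (theta n xu xs t) ^ 2)) /\
       (xu t <> 0 ->
          alpha * (beta * sin (theta n xu xs t) ^ 2
                   - gamma * cos (theta n xu xs t) ^ 2)
          = alpha * xi beta gamma (tan (theta n xu xs t))) /\
       - gamma * alpha <= alpha * (beta * sin (theta n xu xs t) ^ 2
                                   - gamma * cos (theta n xu xs t) ^ 2)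
                       <= beta * alpha /\
       Rpower (trajnorm n xu xs t) (- alpha)
         <= Rpower (trajnorm n xu xs T) (- alpha) + gamma * alpha * (T - t) /\
       Rpower (trajnorm n xu xs t) (- alpha)
         <= Rpower (trajnorm n xu xs 0) (- alpha) + beta * alpha * t)
  /\
  (forall T0 s Ts : R, 0 <= T0 ->
     is_traj n alpha gamma beta xu xs 0 T0 ->
     trajnorm n xu xs 0 = r0 -> trajnorm n xu xs T0 = r0 ->
     (forall t, 0 < t < T0 -> trajnorm n xu xs t < r0) ->
     Rbar_lt (Finite s) (tantheta n xu xs 0) ->
     Rbar_lt (tantheta n xu xs T0) (Finite s) ->
     0 <= Ts <= T0 -> tantheta n xu xs Ts = Finite s ->
     (forall t, 0 <= t <= Ts ->
        Rpower (trajnorm n xu xs t) (- alpha)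
          >= Rpower r0 (- alpha) + alpha * xi beta gamma s * t) /\
     (forall t, Ts <= t <= T0 ->
        Rpower (trajnorm n xu xs t) (- alpha)
          >= Rpower r0 (- alpha) - alpha * xi beta gamma s * (T0 - t))).
Proof.
  intros Halpha Hg Hb Hr0. split.
  - intros T HT0 HT Hin HN0.
    assert (Hball : forall t, 0 <= t <= T -> trajnorm n xu xs t <= r0)
      by (intros t Ht; left; apply Hin, Ht).
    intros t Ht.
    pose proof (rate_bounds beta gamma (theta n xu xs t) ltac:(lra) ltac:(lra)).
    destruct (normpow_growth_bounds HT ltac:(lra) ltac:(lra) ltac:(lra) Hball HN0 t Ht).
    repeat split; [| intros Hu; now rewrite rate_xi | nra | nra | lra | lra].
    apply (deriv_normpow_theta HT); [exact Ht|].
    apply (trajnorm_neq0_forward HT ltac:(lra) ltac:(lra) ltac:(lra) Hball HN0), Ht.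
  -
    intros T0 s Ts HT0 HT HN0 HNT Hin _ HsT0 HTs HsTs.
    assert (Hball : forall t, 0 <= t <= T0 -> trajnorm n xu xs t <= r0).
    { intros t Ht. destruct (Req_dec t 0) as [->|]; [lra|].
      destruct (Req_dec t T0) as [->|]; [lra | left; apply Hin; lra]. }
    destruct (tantheta_eq_finite _ _ HsTs) as [_ Htan].
    destruct (normpow_exit_bounds HT ltac:(lra) ltac:(lra) ltac:(lra) Hball s Ts ltac:(lra)
                (tantheta_lt_finite _ _ HsT0) HTs Htan) as [Hbefore Hafter].
    rewrite HN0 in Hbefore. rewrite HNT in Hafter.
    split; intros t Ht; [specialize (Hbefore t Ht) | specialize (Hafter t Ht)]; lra.
Qed.
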